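(* Let $\Sigma$ be a complete rational polyhedral fan in $\mathbb{R}^n$ with rays $\rho_1,\ldots,\rho_k$ and primitive ray generators $u_1,\ldots,u_k\in\mathbb{Z}^n$, and let $F=[u_1~\cdots~u_k]\in\mathbb{Z}^{n\times k}$. Let $Z\subset\mathbb{C}^k$ be the base locus and $G\subset(\mathbb{C}^* )^k$ the group of the Cox construction (see context). Let $P\in\mathbb{Z}^{k\times k}$, $Q\in\mathbb{Z}^{n\times n}$ be unimodular matrices with $PF^\top Q=\mathrm{diag}(s_1,\ldots,s_n)$ (a $k\times n$ matrix in Smith normal form, all $s_i\neq 0$), let $P'$ be the submatrix of the first $n$ rows and $P''$ the submatrix of the last $k-n$ rows of $P$, and let $W_i\subset\mathbb{C}^*$ be the group of $s_i$-th roots of unity. Then for every $z=(z_1,\ldots,z_k)\in\mathbb{C}^k\setminus Z$, the orbit $G\cdot z=\{(g_1z_1,\ldots,g_kz_k)\mid g\in G\}$ is parametrized by the map $$\Big(\bigoplus_{i=1}^n W_i\Big)\oplus(\mathbb{C}^* )^{k-n}\to\mathbb{C}^k\setminus Z,\qquad (w,\lambda)\mapsto\big(w^{P'_{:,1}}\lambda^{P''_{:,1}}z_1,\ \ldots,\ w^{P'_{:,k}}\lambda^{P''_{:,k}}z_k\big),$$ i.e. $G\cdot z$ is the image of this map.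
   Context: Notation: for a vector $v$ and integer vector $a$, $v^a=\prod_j v_j^{a_j}$; $P'_{:,i}$ and $P''_{:,i}$ denote the $i$-th columns of $P'$, $P''$. The base locus is $Z=V_{\mathbb{C}^k}(B)$ where $B\subset\mathbb{C}[x_1,\ldots,x_k]$ is the monomial ideal generated by $\prod_{i:\rho_i\not\subset\sigma}x_i$ for $\sigma$ ranging over the $n$-dimensional cones of $\Sigma$. The group $G$ is $G=\{g\in(\mathbb{C}^* )^k\mid g^{F_{1,:}}=\cdots=g^{F_{n,:}}=1\}$, where $F_{j,:}$ is the $j$-th row of $F$; it acts on $\mathbb{C}^k\setminus Z$ by coordinatewise multiplication. The toric variety $X_\Sigma$ is the quotient of $\mathbb{C}^k\setminus Z$ by $G$ via the toric morphism $\pi$ induced by $F$. *)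

(* Complex numbers are modelled as R[i] (mathcomp-real-closed)
   for R : realType (the complete archimedean ordered field, i.e. the reals). *)
From HB Require Import structures.
From mathcomp Require Import all_boot all_order all_algebra.
From mathcomp Require Import reals.
From mathcomp Require Import complex.
Set Implicit Arguments. Unset Strict Implicit. Unset Printing Implicit Defensive.
Import Order.TTheory GRing.Theory Num.Theory.
Local Open Scope ring_scope.

Section Fan.
Variables (R : realType) (n k : nat).
(* F : the n x k integer matrix whose columns are the ray generators u_1..u_k *)
Variable F : 'M[int]_(n, k).

Definition ugen (i : 'I_k) : 'cV[R]_n := map_mx (fun a : int => a%:~R) (col i F).

(* A cone of the fan is encoded by the set sigma of indices of the rays it
   contains; the cone itself is the conic hull of the corresponding u_i. *)
Definition cone (sigma : {set 'I_k}) : 'cV[R]_n -> Prop :=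
  fun x => exists a : 'I_k -> R,
    (forall i, 0 <= a i) /\ (forall i, i \notin sigma -> a i = 0) /\
    x = \sum_i a i *: ugen i.

Definition is_face (S C : 'cV[R]_n -> Prop) : Prop :=
  exists m : 'rV[R]_n, (forall x, C x -> 0 <= (m *m x) ord0 ord0) /\
    (forall x, S x <-> (C x /\ (m *m x) ord0 ord0 = 0)).

Definition cone_dim (sigma : {set 'I_k}) : nat :=
  \rank (\matrix_(i < k, j < n) (if i \in sigma then ugen i j ord0 else 0)).

Definition primitive (u : 'cV[int]_n) : Prop :=
  u != 0 /\ forall d : int, (forall j, (d %| u j ord0)%Z) -> `|d| = 1.

Definition complete_fan_with_rays (Sigma : {set {set 'I_k}}) : Prop :=
  (* each cone is encoded by all the rays it contains *)
  (forall sigma, sigma \in Sigma -> forall i, cone sigma (ugen i) -> i \in sigma) /\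
  (forall sigma, sigma \in Sigma -> forall x, cone sigma x -> cone sigma (- x) -> x = 0) /\
  (forall sigma, sigma \in Sigma -> forall S, is_face S (cone sigma) ->
     exists2 tau, tau \in Sigma & forall x, cone tau x <-> S x) /\
  (forall sigma tau, sigma \in Sigma -> tau \in Sigma ->
     is_face (fun x => cone sigma x /\ cone tau x) (cone sigma) /\
     is_face (fun x => cone sigma x /\ cone tau x) (cone tau)) /\
  (forall i, [set i] \in Sigma) /\
  (forall i j, (forall x, cone [set i] x <-> cone [set j] x) -> i = j) /\
  (forall sigma, sigma \in Sigma -> cone_dim sigma = 1%N ->
     exists i, forall x, cone sigma x <-> cone [set i] x) /\
  (forall i, primitive (col i F)) /\
  (forall x : 'cV[R]_n, exists2 sigma, sigma \in Sigma & cone sigma x).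
End Fan.

Section Cox.
Variables (C : fieldType) (n k : nat) (F : 'M[int]_(n, k)).

Definition mono (l : nat) (v : 'I_l -> C) (a : 'I_l -> int) : C :=
  \prod_j v j ^ a j.

Definition in_base_locus (R : realType) (Sigma : {set {set 'I_k}}) (z : 'I_k -> C) : Prop :=
  forall sigma, sigma \in Sigma -> @cone_dim R n k F sigma = n ->
    \prod_(i | i \notin sigma) z i = 0.

Definition in_G (g : 'I_k -> C) : Prop :=
  (forall i, g i != 0) /\ forall j : 'I_n, mono g (fun i => F j i) = 1.

Definition in_Gorbit (z y : 'I_k -> C) : Prop :=
  exists g, in_G g /\ forall i, y i = g i * z i.
End Cox.

(* Since P is unimodular, h |-> h^P is an automorphism of the torus (K^* )^k,
   so every g in the torus is g = h^P for a unique h. Then g^(F^T) = h^(P F^T),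
   and since Q is unimodular this is trivial iff h^(P F^T Q) = h^(diag s) is,
   i.e. iff h_j^(s_j) = 1 for j <= n, the last k - n coordinates of h being
   free. Splitting h = (w, lambda) gives g_i = w^(P'_i) lambda^(P''_i). *)
From HB Require Import structures.
From mathcomp Require Import all_boot all_order all_algebra.
From mathcomp Require Import reals complex.
Import Order.TTheory GRing.Theory Num.Theory.
Local Open Scope ring_scope.
Set Implicit Arguments. Unset Strict Implicit. Unset Printing Implicit Defensive.

Section Monomials.
Variable K : fieldType.

Definition monomap l p (A : 'M[int]_(l, p)) (h : 'I_l -> K) : 'I_p -> K :=
  fun i => mono h (fun j => A j i).

Lemma mono_neq0 l (h : 'I_l -> K) a : (forall j, h j != 0) -> mono h a != 0.
Proof. by move=> h_neq0; apply/prodf_neq0 => j _; rewrite expfz_neq0. Qed.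

Lemma mono_single l (h : 'I_l -> K) a i :
  (forall j, j != i -> a j = 0) -> mono h a = h i ^ a i.
Proof.
move=> a0; rewrite /mono (bigD1 i) //= big1 ?mulr1 // => j /a0 ->.
exact: expr0z.
Qed.

Lemma mono_split_ord n m (h : 'I_(n + m) -> K) a :
  mono h a = mono (fun j => h (lshift m j)) (fun j => a (lshift m j)) *
             mono (fun j => h (rshift n j)) (fun j => a (rshift n j)).
Proof. exact: big_split_ord. Qed.

Lemma monomap_neq0 l p (A : 'M[int]_(l, p)) h :
  (forall j, h j != 0) -> forall i, monomap A h i != 0.
Proof. by move=> h_neq0 i; apply: mono_neq0. Qed.

Lemma monomapM l p q (A : 'M[int]_(l, p)) (B : 'M[int]_(p, q)) h :
  (forall j, h j != 0) -> monomap B (monomap A h) =1 monomap (A *m B) h.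
Proof.
move=> h_neq0 i; rewrite /monomap /mono.
transitivity (\prod_(j < p) \prod_(r < l) h r ^ (A r j * B j i)).
  apply: eq_bigr => j _.
  rewrite (big_morph (fun x => x ^ B j i) (fun x y => expfzMl x y (B j i)) (exp1rz _ _)).
  by apply: eq_bigr => r _; rewrite exprz_exp.
rewrite exchange_big /=; apply: eq_bigr => r _; rewrite mxE.
have hr_unit : h r \is a GRing.unit by rewrite unitfE.
by rewrite (big_morph (fun x => h r ^ x) (exprzDr hr_unit) (expr0z _)).
Qed.

Lemma monomap_idmx l (h : 'I_l -> K) : monomap 1%:M h =1 h.
Proof.
move=> i; rewrite /monomap (@mono_single _ h _ i) ?mxE ?eqxx ?expr1z //.
by move=> j /negbTE ji; rewrite mxE ji.
Qed.

Lemma monomap_cst1 l p (A : 'M[int]_(l, p)) : monomap A (fun=> 1) =1 (fun=> 1).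
Proof. by move=> i; apply: big1 => j _; rewrite exp1rz. Qed.

Lemma eq_monomap l p (A : 'M[int]_(l, p)) h1 h2 :
  h1 =1 h2 -> monomap A h1 =1 monomap A h2.
Proof. by move=> eq_h i; apply: eq_bigr => j _; rewrite eq_h. Qed.

Lemma monomap_eq1_mulmxr l p (A : 'M[int]_(l, p)) (U : 'M[int]_p) h :
  U \in unitmx -> (forall j, h j != 0) ->
  monomap A h =1 (fun=> 1) <-> monomap (A *m U) h =1 (fun=> 1).
Proof.
move=> U_unit h_neq0; split=> hA i.
  by rewrite -monomapM // (eq_monomap _ hA) monomap_cst1.
by rewrite -[A](mulmxK U_unit) -monomapM // (eq_monomap _ hA) monomap_cst1.
Qed.

Lemma monomap_col_split n m p (A : 'M[int]_(n + m, p)) h i :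
  monomap A h i = mono (fun j => h (lshift m j)) (fun j => usubmx A j i) *
                  mono (fun j => h (rshift n j)) (fun j => dsubmx A j i).
Proof.
by rewrite /monomap mono_split_ord; congr (_ * _); apply: eq_bigr => j _; rewrite mxE.
Qed.

Lemma in_G_monomap n k (F : 'M[int]_(n, k)) g :
  in_G F g <-> (forall i, g i != 0) /\ monomap F^T g =1 (fun=> 1).
Proof.
have monoF j : monomap F^T g j = mono g (fun i => F j i).
  by apply: eq_bigr => i _; rewrite mxE.
by split=> -[g_neq0 gF]; split=> // j; rewrite ?monoF ?gF // -monoF gF.
Qed.

Lemma monomap_snf n m (s : 'I_n -> int) h j :
  monomap (\matrix_(i < n + m, j < n) (if val i == val j then s j else 0)) h j
  = h (lshift m j) ^ s j.
Proof.
rewrite /monomap (@mono_single _ h _ (lshift m j)) ?mxE ?eqxx //.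
move=> i ij; rewrite mxE; case: eqP => // eq_ij.
by case/eqP: ij; apply: ord_inj.
Qed.

Lemma root_unity_neq0 (x : K) (e : int) : e != 0 -> x ^ e = 1 -> x != 0.
Proof.
move=> e_neq0; apply: contra_eq_neq => ->.
by rewrite exp0rz (negbTE e_neq0) eq_sym oner_eq0.
Qed.

End Monomials.

Section CoxOrbits.
Variables (K : fieldType) (n m : nat) (F : 'M[int]_(n, n + m)).
Variables (P : 'M[int]_(n + m)) (Q : 'M[int]_n) (s : 'I_n -> int).
Hypotheses (P_unit : P \in unitmx) (Q_unit : Q \in unitmx).
Hypothesis P_FT_Q :
  P *m F^T *m Q = \matrix_(i < n + m, j < n) (if val i == val j then s j else 0).

Lemma in_G_monomap_snf (h : 'I_(n + m) -> K) : (forall l, h l != 0) ->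
  in_G F (monomap P h) <-> forall j, h (lshift m j) ^ s j = 1.
Proof.
move=> h_neq0; rewrite in_G_monomap.
have PF_eq1 : monomap F^T (monomap P h) =1 (fun=> 1) <->
              monomap (P *m F^T *m Q) h =1 (fun=> 1).
  rewrite -monomap_eq1_mulmxr //.
  by split=> hPF i; rewrite ?monomapM // -?monomapM // hPF.
rewrite PF_eq1 P_FT_Q; split=> [[_ hD] j | hs]; first by rewrite -monomap_snf hD.
by split=> [|j]; [apply: monomap_neq0 | rewrite monomap_snf hs].
Qed.

Lemma in_Gorbit_monomap (z y : 'I_(n + m) -> K) :
  in_Gorbit F z y <-> exists h, [/\ forall l, h l != 0,
    forall j, h (lshift m j) ^ s j = 1 & forall i, y i = monomap P h i * z i].
Proof.
split=> [[g [g_G yE]] | [h [h_neq0 hs yE]]]; last first.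
  by exists (monomap P h); rewrite in_G_monomap_snf.
have g_neq0 := g_G.1; pose h := monomap (invmx P) g.
have h_neq0 : forall l, h l != 0 by apply: monomap_neq0.
have hP i : monomap P h i = g i by rewrite monomapM // mulVmx // monomap_idmx.
exists h; split=> // [|i]; last by rewrite hP.
apply/in_G_monomap_snf; rewrite // in_G_monomap; split=> [i|j]; first by rewrite hP.
by move: g_G; rewrite in_G_monomap => -[_ gF]; rewrite (eq_monomap _ hP) gF.
Qed.

End CoxOrbits.

Theorem lemma3p1 (R : realType) (n m : nat) (F : 'M[int]_(n, n + m))
  (Sigma : {set {set 'I_(n + m)}})
  (hfan : complete_fan_with_rays R F Sigma)
  (P : 'M[int]_(n + m)) (Q : 'M[int]_n) (s : 'I_n -> int)
  (hP : P \in unitmx) (hQ : Q \in unitmx)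
  (hsnf : P *m F^T *m Q = \matrix_(i < n + m, j < n) (if val i == val j then s j else 0))
  (hs : forall j, s j != 0)
  (hs_pos : forall j, 0 < s j)
  (hs_div : forall j j' : 'I_n, (j <= j')%N -> (s j %| s j')%Z)
  (z : 'I_(n + m) -> R[i])
  (hz : ~ in_base_locus F R Sigma z) :
  forall y : 'I_(n + m) -> R[i],
    in_Gorbit F z y <->
    exists (w : 'I_n -> R[i]) (lam : 'I_m -> R[i]),
      (forall j, w j ^ s j = 1) /\ (forall j, lam j != 0) /\
      forall i, y i = mono w (fun j => usubmx P j i) * mono lam (fun j => dsubmx P j i) * z i.
Proof.
move=> y; rewrite (in_Gorbit_monomap hP hQ hsnf); split.
  case=> h [h_neq0 h_roots yE].
  exists (fun j => h (lshift m j)), (fun j => h (rshift n j)).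
  by split=> //; split=> // i; rewrite yE monomap_col_split.
case=> w [lam [w_roots [lam_neq0 yE]]].
pose h l := match split l with inl j => w j | inr j => lam j end.
have hl j : h (lshift m j) = w j by rewrite /h (unsplitK (inl _ j)).
have hr j : h (rshift n j) = lam j by rewrite /h (unsplitK (inr _ j)).
exists h; split=> [l | j | i].
- by rewrite /h; case: split => j //; apply: root_unity_neq0 (hs j) (w_roots j).
- by rewrite hl.
- by rewrite yE monomap_col_split; congr (_ * _ * _); apply: eq_bigr => j _;
    rewrite ?hl ?hr.
Qed.
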